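(* Let $T$ be an MFQST with degree bound $\phi\ge3$. Then every source $z$ of $T$ has degree at most $\phi-1$. Moreover, suppose $z$ has degree exactly $\phi-1$, with in-neighbours $u_1,\dots,u_r$ and out-neighbour $y$. Let $$C=\frac{z+\sum_{i} f(u_iz)\,u_i}{1+\sum_i f(u_iz)}$$ be the centre of mass of $z$ (with mass $1$, its supply) and its in-neighbours (each weighted by the flow on its edge to $z$). Then $z=(C+y)/2$.
   Context: Let $Z=\{z_1,\dots,z_n\}\subset\mathbb{R}^2$ ($n\ge 1$) be a set of sources and $z_{BS}\in\mathbb{R}^2\setminus Z$ a sink; each source has supply $1$. A flow-dependent quadratic Steiner tree (FQST) consists of a finite set $S\subset\mathbb{R}^2$ of Steiner points and a tree $T$ with vertex set $Z\cup S\cup\{z_{BS}\}$ whose edges are directed towards $z_{BS}$. Every node other than the sink has exactly one out-edge, and the sink has none. Each edge $e$ carries a positive flow $f(e)$ such that: - at each source, the flow on its out-edge minus the total flow on its in-edges equals $1$; - at each Steiner point, the out-flow equals the total in-flow; - the sink receives total flow $n$. The cost is $L(T)=\sum_{e\in E(T)} f(e)|e|^2$. An MFQST with degree bound $\phi$ is an FQST minimising $L$ among all FQSTs (any finite $S$, any topology) in which every Steiner point has degree at least $\phi$. In-neighbours of a node are the tails of its in-edges; its out-neighbour is the head of its out-edge. *)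

From Stdlib Require Import Reals Lra Lia Arith List.
Open Scope R_scope.

Definition pt : Type := (R * R)%type.
Definition padd (p q : pt) : pt := (fst p + fst q, snd p + snd q).
Definition pscale (a : R) (p : pt) : pt := (a * fst p, a * snd p).
Definition sq_dist (p q : pt) : R := (fst p - fst q) ^ 2 + (snd p - snd q) ^ 2.

Definition sumR (l : list R) : R := fold_right Rplus 0 l.
Definition sumP (l : list pt) : pt := fold_right padd (0, 0) l.

(** Vertex indexing convention:
      0 .. n-1          : sources (position z i)
      n .. n+m-1        : Steiner points (position spos (v - n))
      n+m               : the sink zBS.
    Every non-sink vertex v has exactly one out-edge v -> par v, carrying
    flow [flow v]. *)
Record fqst : Type := MkFqst {
  nsteiner : nat;
  spos : nat -> pt;
  par : nat -> nat;
  flow : nat -> R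
}.

Section Defs.
Variables (n : nat) (z : nat -> pt) (zBS : pt).

Definition sink (T : fqst) : nat := (n + nsteiner T)%nat.

Definition vpos (T : fqst) (v : nat) : pt :=
  if Nat.ltb v n then z v
  else if Nat.ltb v (n + nsteiner T) then spos T (v - n)
  else zBS.

Definition in_nbrs (T : fqst) (v : nat) : list nat :=
  filter (fun u => Nat.eqb (par T u) v) (seq 0 (n + nsteiner T)).

Definition in_flow (T : fqst) (v : nat) : R := sumR (map (flow T) (in_nbrs T v)).

Definition degree (T : fqst) (v : nat) : nat :=
  (length (in_nbrs T v) + (if Nat.ltb v (n + nsteiner T) then 1 else 0))%nat.

Definition is_fqst (T : fqst) : Prop :=
  let N := (n + nsteiner T)%nat in
  (forall v, (v < N)%nat -> (par T v <= N)%nat /\ 0 < flow T v) /\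
  (forall v, (v < N)%nat -> exists k, Nat.iter k (par T) v = N) /\
  (forall a b, (a < nsteiner T)%nat -> (b < nsteiner T)%nat ->
      spos T a = spos T b -> a = b) /\
  (forall a, (a < nsteiner T)%nat -> spos T a <> zBS /\
      forall i, (i < n)%nat -> spos T a <> z i) /\
  (forall i, (i < n)%nat -> flow T i - in_flow T i = 1) /\
  (forall s, (n <= s < N)%nat -> flow T s = in_flow T s) /\
  in_flow T N = INR n.

Definition cost (T : fqst) : R :=
  sumR (map (fun v => flow T v * sq_dist (vpos T v) (vpos T (par T v)))
            (seq 0 (n + nsteiner T))).

Definition admissible (phi : nat) (T : fqst) : Prop :=
  is_fqst T /\
  forall s, (n <= s < n + nsteiner T)%nat -> (phi <= degree T s)%nat.

Definition is_MFQST (phi : nat) (T : fqst) : Prop :=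
  admissible phi T /\ forall T', admissible phi T' -> cost T <= cost T'.

Definition centre (T : fqst) (v : nat) : pt :=
  pscale (/ (1 + in_flow T v))
    (padd (vpos T v) (sumP (map (fun u => pscale (flow T u) (vpos T u)) (in_nbrs T v)))).

End Defs.

From Stdlib Require Import Reals Lra Lia Arith List.
Open Scope R_scope.

(** Let [i] be a source
    with out-neighbour [y] and in-neighbours [u].  Insert a new Steiner point
    [p] between [i] and [y] and re-attach to [p] a chosen set of moved
    in-neighbours.  The new point has degree (number moved) + 2, so the move
    is admissible whenever this is at least [phi] and [p] is a fresh position.
    The cost change is the quadratic [2 <G, p - z_i> + 2 f(i) |p - z_i|^2],
    where the gradient [G] sums the pulls [f(u)(z_i - u)] of the moved
    vertices and [f(i)(z_i - y)].  Minimality and a first-order argument give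
    [G = 0] for every admissible choice.  If [deg i >= phi], both "move all"
    and "move all but [e]" are admissible; subtracting the two gradients puts
    [e] at [z_i], contradicting distinctness.  If [deg i = phi - 1], "move
    all" is admissible and [G = 0] is exactly [z_i = (C + y) / 2]. *)

Definition vsum (N : nat) (g : nat -> R) : R := sumR (map g (seq 0 N)).

Lemma sumR_app (l1 l2 : list R) : sumR (l1 ++ l2) = sumR l1 + sumR l2.
Proof. induction l1 as [|x l1 IH]; simpl; [lra | rewrite IH; lra]. Qed.

Lemma vsum_succ (N : nat) (g : nat -> R) : vsum (S N) g = vsum N g + g N.
Proof. unfold vsum. rewrite seq_S, map_app, sumR_app. simpl. lra. Qed.

Lemma vsum_ext (N : nat) (g h : nat -> R) :
  (forall v, (v < N)%nat -> g v = h v) -> vsum N g = vsum N h.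
Proof.
  induction N as [|N IH]; intros Hgh; [reflexivity|].
  rewrite !vsum_succ, IH, Hgh; [reflexivity | lia | intros v Hv; apply Hgh; lia].
Qed.

Lemma vsum_plus (N : nat) (g h : nat -> R) : vsum N (fun v => g v + h v) = vsum N g + vsum N h.
Proof. induction N as [|N IH]; [unfold vsum; simpl; lra | rewrite !vsum_succ, IH; lra]. Qed.

Lemma vsum_minus (N : nat) (g h : nat -> R) : vsum N (fun v => g v - h v) = vsum N g - vsum N h.
Proof. induction N as [|N IH]; [unfold vsum; simpl; lra | rewrite !vsum_succ, IH; lra]. Qed.

Lemma vsum_scal (N : nat) (c : R) (g : nat -> R) : vsum N (fun v => c * g v) = c * vsum N g.
Proof. induction N as [|N IH]; [unfold vsum; simpl; lra | rewrite !vsum_succ, IH; lra]. Qed.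

Lemma vsum_nonneg (N : nat) (g : nat -> R) :
  (forall v, (v < N)%nat -> 0 <= g v) -> 0 <= vsum N g.
Proof.
  induction N as [|N IH]; intros Hg; [unfold vsum; simpl; lra|].
  rewrite vsum_succ. assert (0 <= g N) by (apply Hg; lia).
  assert (0 <= vsum N g) by (apply IH; intros v Hv; apply Hg; lia). lra.
Qed.

Lemma vsum_single (N e : nat) (c : R) :
  vsum N (fun v => if Nat.eqb v e then c else 0) = if Nat.ltb e N then c else 0.
Proof.
  induction N as [|N IH]; [reflexivity|].
  rewrite vsum_succ, IH.
  destruct (Nat.eqb_spec N e), (Nat.ltb_spec e N), (Nat.ltb_spec e (S N)); lia || lra.
Qed.

Lemma sum_filter (P : nat -> bool) (f : nat -> R) (l : list nat) :
  sumR (map f (filter P l)) = sumR (map (fun v => if P v then f v else 0) l).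
Proof. induction l as [|a l IH]; simpl; [reflexivity|]. destruct (P a); simpl; rewrite IH; lra. Qed.

Lemma length_filter (P : nat -> bool) (l : list nat) :
  INR (length (filter P l)) = sumR (map (fun v => if P v then 1 else 0) l).
Proof.
  induction l as [|a l IH]; [reflexivity|]. cbn [filter map].
  destruct (P a); cbn [length sumR fold_right]; unfold sumR in *; rewrite <- IH;
    [rewrite S_INR|]; lra.
Qed.

Lemma in_flow_SS (n : nat) (T : fqst) (w : nat) :
  in_flow n T w = vsum (n + nsteiner T) (fun u => if Nat.eqb (par T u) w then flow T u else 0).
Proof. unfold in_flow, in_nbrs. rewrite sum_filter. reflexivity. Qed.

Lemma in_degree_SS (n : nat) (T : fqst) (w : nat) :
  INR (length (in_nbrs n T w)) = vsum (n + nsteiner T) (fun u => if Nat.eqb (par T u) w then 1 else 0).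
Proof. unfold in_nbrs. rewrite length_filter. reflexivity. Qed.

(** Coordinate functionals: [fst] and [snd] are linear, which lets every
    coordinatewise computation be done once for a generic projection. *)
Definition coord_linear (pr : pt -> R) : Prop :=
  (forall a b, pr (padd a b) = pr a + pr b) /\
  (forall c a, pr (pscale c a) = c * pr a) /\ pr (0, 0) = 0.

Lemma coord_linear_fst : coord_linear fst.
Proof. repeat split. Qed.

Lemma coord_linear_snd : coord_linear snd.
Proof. repeat split. Qed.

Lemma coord_sumP (pr : pt -> R) (a : nat -> R) (x : nat -> pt) (l : list nat) :
  coord_linear pr ->
  pr (sumP (map (fun u => pscale (a u) (x u)) l)) = sumR (map (fun u => a u * pr (x u)) l).
Proof.
  intros [Hadd [Hscal H0]]. induction l as [|u l IH]; simpl; [exact H0|].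
  rewrite Hadd, Hscal, IH. reflexivity.
Qed.

Lemma finite_avoid (L : list R) (a : R) : 0 < a -> exists t, 0 < t < a /\ ~ In t L.
Proof.
  intros Ha.
  assert (Hb : exists b, 0 < b <= a /\ forall x, In x L -> x <= 0 \/ b <= x).
  { induction L as [|x L IH].
    - exists a. split; [lra | intros x []].
    - destruct IH as [b [Hb HL]].
      exists (if Rle_dec x 0 then b else Rmin b x). split.
      + destruct (Rle_dec x 0); [lra|]. unfold Rmin; destruct (Rle_dec b x); lra.
      + intros y [<- | Hy].
        * destruct (Rle_dec x 0); [now left|]. right. apply Rmin_r.
        * destruct (HL y Hy) as [Hy0 | Hby]; [now left | right].
          destruct (Rle_dec x 0); [exact Hby|]. eapply Rle_trans; [apply Rmin_l | exact Hby]. }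
  destruct Hb as [b [Hb HL]]. exists (b / 2). split; [lra|].
  intros Hin. destruct (HL _ Hin); lra.
Qed.

(** First-order condition for a quadratic perturbation in the plane: if
    moving a point [z] to any [p] outside a finite set changes a cost by
    [2 <G, p - z> + 2 c |p - z|^2] and never decreases it, then [G = 0].
    (Move [p] a little in the direction [-G].) *)
Lemma first_order_condition (z : pt) (G1 G2 c : R) (Q : list pt) :
  0 < c ->
  (forall p, ~ In p Q ->
     0 <= 2 * (G1 * (fst p - fst z) + G2 * (snd p - snd z)) + 2 * c * sq_dist p z) ->
  G1 = 0 /\ G2 = 0.
Proof.
  intros Hc Hmin.
  set (g := G1 * G1 + G2 * G2).
  assert (Hg : ~ 0 < g).
  2:{ unfold g in Hg. assert (0 <= G1 * G1) by nra. assert (0 <= G2 * G2) by nra. split; nra. }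
  intros Hg.
  (* the parameter t at which q would be reached along p(t) = z - t G *)
  set (tau := fun q : pt => ((fst z - fst q) * G1 + (snd z - snd q) * G2) / g).
  destruct (finite_avoid (map tau Q) (/ c)) as [t [Ht Hnot]]; [apply Rinv_0_lt_compat, Hc|].
  set (p := (fst z - t * G1, snd z - t * G2)).
  assert (HpQ : ~ In p Q).
  { intros Hp. apply Hnot. replace t with (tau p); [apply in_map, Hp|].
    unfold tau, p, g in *; simpl. field. lra. }
  assert (Hct : c * t < 1).
  { assert (Hlt : c * t < c * / c) by (apply Rmult_lt_compat_l; lra).
    rewrite Rinv_r in Hlt; lra. }
  specialize (Hmin p HpQ). unfold p, sq_dist in Hmin; simpl in Hmin.
  assert (Hdecr : 2 * (G1 * (- t * G1) + G2 * (- t * G2)) + 2 * c * (t * t * g) < 0).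
  { assert (0 < 2 * t * g) by (apply Rmult_lt_0_compat; lra). unfold g in *. nra. }
  unfold g in Hdecr. nra.
Qed.

(** Relabelling a vertex when a new vertex is inserted just before the sink:
    the old sink [N] becomes [N + 1], every other vertex keeps its index. *)
Definition relabel (N w : nat) : nat := if Nat.eqb w N then S N else w.

Lemma relabel_lt (N w : nat) : (w < N)%nat -> relabel N w = w.
Proof. unfold relabel. destruct (Nat.eqb_spec w N); lia. Qed.

Lemma relabel_sink (N : nat) : relabel N N = S N.
Proof. unfold relabel. rewrite Nat.eqb_refl. reflexivity. Qed.

Lemma relabel_neq (N w : nat) : relabel N w <> N.
Proof. unfold relabel. destruct (Nat.eqb_spec w N); lia. Qed.

Lemma relabel_le (N w : nat) : (w <= N)%nat -> (relabel N w <= S N)%nat.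
Proof. unfold relabel. destruct (Nat.eqb_spec w N); lia. Qed.

Lemma relabel_eqb (N a b : nat) :
  (a <= N)%nat -> (b <= N)%nat -> Nat.eqb (relabel N a) (relabel N b) = Nat.eqb a b.
Proof.
  intros Ha Hb. unfold relabel.
  destruct (Nat.eqb_spec a N), (Nat.eqb_spec b N), (Nat.eqb_spec a b);
    try reflexivity; try (apply Nat.eqb_eq; lia); apply Nat.eqb_neq; lia.
Qed.

Lemma reach_step (f : nat -> nat) (x t : nat) :
  (exists k, Nat.iter k f (f x) = t) -> exists k, Nat.iter k f x = t.
Proof. intros [k Hk]. exists (S k). rewrite Nat.iter_succ_r. exact Hk. Qed.

Lemma reach_back (f : nat -> nat) (x t : nat) :
  x <> t -> (exists k, Nat.iter k f x = t) -> exists k, Nat.iter k f (f x) = t.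
Proof.
  intros Hx [[|k] Hk]; [simpl in Hk; congruence|].
  rewrite Nat.iter_succ_r in Hk. exists k. exact Hk.
Qed.

Lemma vpos_source (n : nat) (z : nat -> pt) (zBS : pt) (T : fqst) (i : nat) :
  (i < n)%nat -> vpos n z zBS T i = z i.
Proof. intros Hi. unfold vpos. destruct (Nat.ltb_spec i n); [reflexivity | lia]. Qed.

Section TreeFacts.
Variables (n : nat) (z : nat -> pt) (zBS : pt) (T : fqst).
Hypothesis HT : is_fqst n z zBS T.
Local Notation N := (n + nsteiner T)%nat.

Lemma par_le_sink (v : nat) : (v < N)%nat -> (par T v <= N)%nat.
Proof. intros Hv. apply (proj1 HT v Hv). Qed.

Lemma flow_pos (v : nat) : (v < N)%nat -> 0 < flow T v.
Proof. intros Hv. apply (proj1 HT v Hv). Qed.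

Lemma par_neq (v : nat) : (v < N)%nat -> par T v <> v.
Proof.
  intros Hv Hfix. destruct (proj1 (proj2 HT) v Hv) as [k Hk].
  assert (Hiter : Nat.iter k (par T) v = v).
  { clear Hk. induction k as [|k IH]; [reflexivity | simpl; rewrite IH; exact Hfix]. }
  lia.
Qed.

Lemma source_balance (i : nat) : (i < n)%nat -> flow T i = 1 + in_flow n T i.
Proof. intros Hi. destruct HT as (_ & _ & _ & _ & Hsrc & _). specialize (Hsrc i Hi). lra. Qed.

Lemma vpos_neq_source (i e : nat) :
  (forall j k, (j < n)%nat -> (k < n)%nat -> z j = z k -> j = k) ->
  (i < n)%nat -> (e < N)%nat -> e <> i -> vpos n z zBS T e <> z i.
Proof.
  intros Hzinj Hi He Hei. destruct HT as (_ & _ & _ & Hav & _). unfold vpos.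
  destruct (Nat.ltb_spec e n) as [Hen | Hen].
  - intros Heq. apply Hei, Hzinj; assumption.
  - destruct (Nat.ltb_spec e N); [|lia]. apply (Hav (e - n)%nat); lia.
Qed.

End TreeFacts.

(** A new Steiner point at position
    [p] is inserted as vertex [N = n + m] (the sink becomes [N + 1]); the
    source [i] and those of its in-neighbours [u] not selected by [keep]
    (the "moved" ones) are re-attached to the new point, which in turn is
    attached to the old parent of [i].  Flows are rerouted accordingly: the
    new edge carries the old flow of [i], and [i] now only forwards its own
    supply and the flow of the kept in-neighbours. *)
Definition moved (T : fqst) (i : nat) (keep : nat -> bool) (u : nat) : bool :=
  andb (Nat.eqb (par T u) i) (negb (keep u)).

Definition kept (T : fqst) (i : nat) (keep : nat -> bool) (u : nat) : bool :=
  andb (Nat.eqb (par T u) i) (keep u).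

Definition split_tree (n : nat) (T : fqst) (i : nat) (keep : nat -> bool) (p : pt) : fqst :=
  let N := (n + nsteiner T)%nat in
  MkFqst (S (nsteiner T))
    (fun a => if Nat.ltb a (nsteiner T) then spos T a else p)
    (fun v => if Nat.eqb v N then relabel N (par T i)
              else if orb (Nat.eqb v i) (moved T i keep v) then N
              else relabel N (par T v))
    (fun v => if Nat.eqb v N then flow T i
              else if Nat.eqb v i then 1 + vsum N (fun u => if kept T i keep u then flow T u else 0)
              else flow T v).

Lemma moved_kept_partition (N : nat) (T : fqst) (i : nat) (keep : nat -> bool) (a : nat -> R) :
  vsum N (fun u => if Nat.eqb (par T u) i then a u else 0)
  = vsum N (fun u => if moved T i keep u then a u else 0)
    + vsum N (fun u => if kept T i keep u then a u else 0).
Proof.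
  rewrite <- vsum_plus. apply vsum_ext. intros u _. unfold moved, kept.
  destruct (Nat.eqb (par T u) i), (keep u); simpl; lra.
Qed.

(** The first-order variation of the cost under splitting (one coordinate,
    selected by [pr]): moved edges and the edge of [i] pull the new point. *)
Definition split_gradient (n : nat) (z : nat -> pt) (zBS : pt) (T : fqst) (i : nat)
    (keep : nat -> bool) (pr : pt -> R) : R :=
  vsum (n + nsteiner T)
     (fun u => if moved T i keep u then flow T u * (pr (z i) - pr (vpos n z zBS T u)) else 0)
  + flow T i * (pr (z i) - pr (vpos n z zBS T (par T i))).

Section Split.
Variables (n : nat) (z : nat -> pt) (zBS : pt) (T : fqst) (i : nat) (keep : nat -> bool) (p : pt).
Hypotheses (HT : is_fqst n z zBS T) (Hi : (i < n)%nat).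
Local Notation N := (n + nsteiner T)%nat.
Local Notation T' := (split_tree n T i keep p).

Let split_size : (n + nsteiner T' = S N)%nat.
Proof. simpl. lia. Qed.

Let i_lt_N : (i < N)%nat.
Proof. lia. Qed.

Let par_i_le : (par T i <= N)%nat.
Proof. apply (par_le_sink n z zBS T HT), i_lt_N. Qed.

Let par_i_neq : par T i <> i.
Proof. apply (par_neq n z zBS T HT), i_lt_N. Qed.

Let moved_i : moved T i keep i = false.
Proof. unfold moved. rewrite (proj2 (Nat.eqb_neq _ _) par_i_neq). reflexivity. Qed.

Let moved_par (u : nat) : moved T i keep u = true -> par T u = i.
Proof. unfold moved. intros Hm. apply andb_prop in Hm. apply Nat.eqb_eq, Hm. Qed.

Let not_moved_kept (u : nat) :
  moved T i keep u = false -> Nat.eqb (par T u) i = kept T i keep u.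
Proof. unfold moved, kept. destruct (Nat.eqb (par T u) i), (keep u); simpl; congruence. Qed.

Let moved_not_kept (u : nat) : moved T i keep u = true -> kept T i keep u = false.
Proof. unfold moved, kept. destruct (Nat.eqb (par T u) i), (keep u); simpl; congruence. Qed.

Let kept_neq_i (u : nat) : kept T i keep u = true -> u <> i.
Proof.
  unfold kept. intros Hk ->. apply andb_prop in Hk. apply par_i_neq, Nat.eqb_eq, Hk.
Qed.

Lemma split_par_new : par T' N = relabel N (par T i).
Proof. cbn [par split_tree]. rewrite Nat.eqb_refl. reflexivity. Qed.

Lemma split_par_i : par T' i = N.
Proof.
  cbn [par split_tree]. rewrite (proj2 (Nat.eqb_neq i N)) by lia.
  rewrite Nat.eqb_refl. reflexivity.
Qed.

Lemma split_par_moved (u : nat) : (u < N)%nat -> moved T i keep u = true -> par T' u = N.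
Proof.
  intros Hu Hm. cbn [par split_tree]. rewrite (proj2 (Nat.eqb_neq u N)) by lia.
  rewrite Hm, Bool.orb_true_r. reflexivity.
Qed.

Lemma split_par_other (u : nat) : (u < N)%nat -> u <> i -> moved T i keep u = false ->
  par T' u = relabel N (par T u).
Proof.
  intros Hu Hui Hm. cbn [par split_tree]. rewrite (proj2 (Nat.eqb_neq u N)) by lia.
  rewrite (proj2 (Nat.eqb_neq u i)) by exact Hui. rewrite Hm. reflexivity.
Qed.

Lemma split_flow_new : flow T' N = flow T i.
Proof. cbn [flow split_tree]. rewrite Nat.eqb_refl. reflexivity. Qed.

Lemma split_flow_i : flow T' i = 1 + vsum N (fun u => if kept T i keep u then flow T u else 0).
Proof.
  cbn [flow split_tree]. rewrite (proj2 (Nat.eqb_neq i N)) by lia.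
  rewrite Nat.eqb_refl. reflexivity.
Qed.

Lemma split_flow_other (u : nat) : (u < N)%nat -> u <> i -> flow T' u = flow T u.
Proof.
  intros Hu Hui. cbn [flow split_tree]. rewrite (proj2 (Nat.eqb_neq u N)) by lia.
  rewrite (proj2 (Nat.eqb_neq u i)) by exact Hui. reflexivity.
Qed.

Lemma split_vpos_old (v : nat) : (v < N)%nat -> vpos n z zBS T' v = vpos n z zBS T v.
Proof.
  intros Hv. unfold vpos. rewrite split_size. cbn [spos split_tree].
  destruct (Nat.ltb_spec v n); [reflexivity|].
  destruct (Nat.ltb_spec v N), (Nat.ltb_spec v (S N)), (Nat.ltb_spec (v - n) (nsteiner T));
    reflexivity || lia.
Qed.

Lemma split_vpos_new : vpos n z zBS T' N = p.
Proof.
  unfold vpos. rewrite split_size. cbn [spos split_tree].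
  destruct (Nat.ltb_spec N n), (Nat.ltb_spec N (S N)), (Nat.ltb_spec (N - n) (nsteiner T));
    reflexivity || lia.
Qed.

Lemma split_vpos_relabel (w : nat) : (w <= N)%nat ->
  vpos n z zBS T' (relabel N w) = vpos n z zBS T w.
Proof.
  intros Hw. destruct (Nat.eq_dec w N) as [-> | Hne].
  - rewrite relabel_sink. unfold vpos. rewrite split_size.
    destruct (Nat.ltb_spec (S N) n), (Nat.ltb_spec (S N) (S N)), (Nat.ltb_spec N n),
      (Nat.ltb_spec N N); reflexivity || lia.
  - rewrite relabel_lt by lia. apply split_vpos_old. lia.
Qed.

(** At an old vertex [w <> i] nothing changes
    (the edge [i -> w], if any, is replaced by [N -> w] with the same weight);
    at [i] only the kept in-neighbours remain; the new vertex collects the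
    moved in-neighbours and [i]. *)
Lemma split_in_sum_old (a a' : nat -> R) (w : nat) :
  (w <= N)%nat -> w <> i ->
  (forall u, (u < N)%nat -> u <> i -> a' u = a u) -> a' N = a i ->
  vsum (S N) (fun u => if Nat.eqb (par T' u) (relabel N w) then a' u else 0)
  = vsum N (fun u => if Nat.eqb (par T u) w then a u else 0).
Proof.
  intros Hw Hwi Ha HaN.
  rewrite vsum_succ, split_par_new, (relabel_eqb N _ _ par_i_le Hw), HaN.
  rewrite (vsum_ext _ _ (fun u => (if Nat.eqb (par T u) w then a u else 0)
             - (if Nat.eqb u i then (if Nat.eqb (par T i) w then a i else 0) else 0))).
  { rewrite vsum_minus, vsum_single. destruct (Nat.ltb_spec i N); [lra | lia]. }
  intros u Hu. destruct (Nat.eq_dec u i) as [-> | Hui].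
  - rewrite split_par_i, Nat.eqb_refl.
    rewrite (proj2 (Nat.eqb_neq N _)) by (apply not_eq_sym, relabel_neq). lra.
  - rewrite (proj2 (Nat.eqb_neq u i) Hui). destruct (moved T i keep u) eqn:Hm.
    + rewrite (split_par_moved u Hu Hm), (moved_par u Hm).
      rewrite (proj2 (Nat.eqb_neq N _)) by (apply not_eq_sym, relabel_neq).
      rewrite (proj2 (Nat.eqb_neq i w)) by auto. lra.
    + rewrite (split_par_other u Hu Hui Hm).
      rewrite (relabel_eqb N _ _ (par_le_sink n z zBS T HT u Hu) Hw), (Ha u Hu Hui). lra.
Qed.

Lemma split_in_sum_i (a' : nat -> R) :
  vsum (S N) (fun u => if Nat.eqb (par T' u) i then a' u else 0)
  = vsum N (fun u => if kept T i keep u then a' u else 0).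
Proof.
  assert (Hrel : forall w, (w <= N)%nat -> Nat.eqb (relabel N w) i = Nat.eqb w i).
  { intros w Hw. rewrite <- (relabel_eqb N w i Hw (Nat.lt_le_incl _ _ i_lt_N)).
    rewrite (relabel_lt N i i_lt_N). reflexivity. }
  rewrite vsum_succ, split_par_new, (Hrel _ par_i_le).
  rewrite (proj2 (Nat.eqb_neq _ _) par_i_neq), Rplus_0_r.
  apply vsum_ext. intros u Hu. destruct (Nat.eq_dec u i) as [-> | Hui].
  - rewrite split_par_i, (proj2 (Nat.eqb_neq N i)) by lia.
    destruct (kept T i keep i) eqn:Hk; [exfalso; exact (kept_neq_i i Hk eq_refl) | reflexivity].
  - destruct (moved T i keep u) eqn:Hm.
    + rewrite (split_par_moved u Hu Hm), (proj2 (Nat.eqb_neq N i)) by lia.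
      rewrite (moved_not_kept u Hm). reflexivity.
    + rewrite (split_par_other u Hu Hui Hm), (Hrel _ (par_le_sink n z zBS T HT u Hu)).
      rewrite (not_moved_kept u Hm). reflexivity.
Qed.

Lemma split_in_sum_new (a' : nat -> R) :
  vsum (S N) (fun u => if Nat.eqb (par T' u) N then a' u else 0)
  = vsum N (fun u => if moved T i keep u then a' u else 0) + a' i.
Proof.
  rewrite vsum_succ, split_par_new, (proj2 (Nat.eqb_neq _ N) (relabel_neq N _)), Rplus_0_r.
  rewrite (vsum_ext _ _ (fun u => (if moved T i keep u then a' u else 0)
                                + (if Nat.eqb u i then a' i else 0))).
  { rewrite vsum_plus, vsum_single. destruct (Nat.ltb_spec i N); [reflexivity | lia]. }
  intros u Hu. destruct (Nat.eq_dec u i) as [-> | Hui].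
  - rewrite split_par_i, moved_i, !Nat.eqb_refl. lra.
  - rewrite (proj2 (Nat.eqb_neq u i) Hui). destruct (moved T i keep u) eqn:Hm.
    + rewrite (split_par_moved u Hu Hm), Nat.eqb_refl. lra.
    + rewrite (split_par_other u Hu Hui Hm), (proj2 (Nat.eqb_neq _ N) (relabel_neq N _)). lra.
Qed.

Let split_kept_flow :
  vsum N (fun u => if kept T i keep u then flow T' u else 0)
  = vsum N (fun u => if kept T i keep u then flow T u else 0).
Proof.
  apply vsum_ext. intros u Hu. destruct (kept T i keep u) eqn:Hk; [|reflexivity].
  apply split_flow_other; [exact Hu | exact (kept_neq_i u Hk)].
Qed.

Let split_moved_flow :
  vsum N (fun u => if moved T i keep u then flow T' u else 0)
  = vsum N (fun u => if moved T i keep u then flow T u else 0).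
Proof.
  apply vsum_ext. intros u Hu. destruct (moved T i keep u) eqn:Hm; [|reflexivity].
  apply split_flow_other; [exact Hu | intros ->; congruence].
Qed.

Lemma split_flow_i_moved :
  flow T' i = flow T i - vsum N (fun u => if moved T i keep u then flow T u else 0).
Proof.
  rewrite split_flow_i, (source_balance n z zBS T HT i Hi), in_flow_SS.
  rewrite (moved_kept_partition N T i keep). lra.
Qed.

Lemma split_edges (v : nat) : (v < S N)%nat -> (par T' v <= S N)%nat /\ 0 < flow T' v.
Proof.
  intros Hv. destruct (Nat.eq_dec v N) as [-> | HvN].
  - rewrite split_par_new, split_flow_new.
    split; [apply relabel_le, par_i_le | apply (flow_pos n z zBS T HT i i_lt_N)].
  - destruct (Nat.eq_dec v i) as [-> | Hvi].
    + rewrite split_par_i, split_flow_i. split; [lia|].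
      assert (0 <= vsum N (fun u => if kept T i keep u then flow T u else 0)); [|lra].
      apply vsum_nonneg. intros u Hu. destruct (kept T i keep u); [|lra].
      apply Rlt_le, (flow_pos n z zBS T HT u Hu).
    + rewrite (split_flow_other v ltac:(lia) Hvi).
      split; [|apply (flow_pos n z zBS T HT v); lia].
      destruct (moved T i keep v) eqn:Hm.
      * rewrite (split_par_moved v ltac:(lia) Hm). lia.
      * rewrite (split_par_other v ltac:(lia) Hvi Hm).
        apply relabel_le, (par_le_sink n z zBS T HT v). lia.
Qed.

(** Every path of [T] to the sink projects to a path of the split tree; the
    only detour is the new vertex, entered from [i] or a moved vertex and
    left towards the old parent of [i]. *)
Lemma split_reaches_sink (v : nat) :
  (v < S N)%nat -> exists k, Nat.iter k (par T') v = S N.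
Proof.
  set (reach := fun x => exists k, Nat.iter k (par T') x = S N).
  assert (Hnew : reach i -> reach N).
  { intros H. rewrite <- split_par_i. apply reach_back; [lia | exact H]. }
  assert (Hold : forall k w, (w <= N)%nat -> Nat.iter k (par T) w = N -> reach (relabel N w)).
  { induction k as [|k IH]; intros w Hw Hk.
    - simpl in Hk. subst w. rewrite relabel_sink. exists 0%nat. reflexivity.
    - destruct (Nat.eq_dec w N) as [-> | HwN].
      { rewrite relabel_sink. exists 0%nat. reflexivity. }
      rewrite Nat.iter_succ_r in Hk. rewrite relabel_lt by lia.
      specialize (IH (par T w) (par_le_sink n z zBS T HT w ltac:(lia)) Hk).
      apply reach_step. destruct (Nat.eq_dec w i) as [-> | Hwi].
      + rewrite split_par_i. apply reach_step. rewrite split_par_new. exact IH.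
      + destruct (moved T i keep w) eqn:Hm.
        * rewrite (split_par_moved w ltac:(lia) Hm). apply Hnew.
          rewrite (moved_par w Hm), (relabel_lt N i i_lt_N) in IH. exact IH.
        * rewrite (split_par_other w ltac:(lia) Hwi Hm). exact IH. }
  assert (Hold' : forall w, (w < N)%nat -> reach w).
  { intros w Hw. destruct (proj1 (proj2 HT) w Hw) as [k Hk].
    rewrite <- (relabel_lt N w Hw). exact (Hold k w ltac:(lia) Hk). }
  intros Hv. destruct (Nat.eq_dec v N) as [-> | HvN].
  - apply Hnew, Hold', i_lt_N.
  - apply Hold'. lia.
Qed.

Let split_in_flow_old (w : nat) : (w <= N)%nat -> w <> i ->
  in_flow n T' (relabel N w) = in_flow n T w.
Proof.
  intros Hw Hwi. rewrite !in_flow_SS, split_size.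
  apply split_in_sum_old; [exact Hw | exact Hwi | exact split_flow_other | exact split_flow_new].
Qed.

Lemma split_balance_source (j : nat) : (j < n)%nat -> flow T' j - in_flow n T' j = 1.
Proof.
  intros Hj. destruct (Nat.eq_dec j i) as [-> | Hji].
  - rewrite in_flow_SS, split_size, split_in_sum_i, split_kept_flow, split_flow_i. lra.
  - pose proof (split_in_flow_old j ltac:(lia) Hji) as Hin.
    rewrite relabel_lt in Hin by lia. rewrite Hin, (split_flow_other j ltac:(lia) Hji).
    rewrite (source_balance n z zBS T HT j Hj). lra.
Qed.

Lemma split_balance_steiner (s : nat) : (n <= s < S N)%nat -> flow T' s = in_flow n T' s.
Proof.
  intros Hs. destruct (Nat.eq_dec s N) as [-> | HsN].
  - rewrite in_flow_SS, split_size, split_in_sum_new, split_moved_flow.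
    rewrite split_flow_new, split_flow_i_moved. lra.
  - pose proof (split_in_flow_old s ltac:(lia) ltac:(lia)) as Hin.
    rewrite relabel_lt in Hin by lia. rewrite Hin, (split_flow_other s ltac:(lia) ltac:(lia)).
    destruct HT as (_ & _ & _ & _ & _ & Hst & _). apply Hst. lia.
Qed.

Lemma split_sink_inflow : in_flow n T' (S N) = INR n.
Proof.
  rewrite <- relabel_sink, (split_in_flow_old N ltac:(lia) ltac:(lia)).
  destruct HT as (_ & _ & _ & _ & _ & _ & Hsink). exact Hsink.
Qed.

Lemma split_is_fqst :
  (forall j, (j < n)%nat -> p <> z j) -> p <> zBS ->
  (forall a, (a < nsteiner T)%nat -> spos T a <> p) ->
  is_fqst n z zBS T'.
Proof.
  intros Hpz HpBS Hps. unfold is_fqst. cbv zeta. rewrite split_size.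
  destruct HT as (_ & _ & Hinj & Hav & _).
  split; [exact split_edges|]. split; [exact split_reaches_sink|].
  split; [|split; [|split; [exact split_balance_source|
                            split; [exact split_balance_steiner | exact split_sink_inflow]]]].
  - intros a b Ha Hb. cbn [spos split_tree nsteiner] in *.
    destruct (Nat.ltb_spec a (nsteiner T)), (Nat.ltb_spec b (nsteiner T)).
    + apply Hinj; assumption.
    + intros Heq. exfalso. apply (Hps a); assumption.
    + intros Heq. exfalso. apply (Hps b); auto.
    + lia.
  - intros a Ha. cbn [spos split_tree nsteiner] in *.
    destruct (Nat.ltb_spec a (nsteiner T)); [apply Hav; assumption|].
    split; [exact HpBS | intros j Hj; apply Hpz, Hj].
Qed.

Lemma split_degree_new :
  INR (degree n T' N) = 2 + vsum N (fun u => if moved T i keep u then 1 else 0).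
Proof.
  unfold degree. rewrite split_size, plus_INR, in_degree_SS, split_size, split_in_sum_new.
  destruct (Nat.ltb_spec N (S N)); [simpl; lra | lia].
Qed.

Lemma split_degree_old (s : nat) : (s < N)%nat -> s <> i -> degree n T' s = degree n T s.
Proof.
  intros Hs Hsi.
  assert (Hin : length (in_nbrs n T' s) = length (in_nbrs n T s)).
  { apply INR_eq. rewrite !in_degree_SS, split_size.
    pose proof (split_in_sum_old (fun _ => 1) (fun _ => 1) s ltac:(lia) Hsi
                  (fun _ _ _ => eq_refl) eq_refl) as Hsum.
    rewrite (relabel_lt N s Hs) in Hsum. exact Hsum. }
  unfold degree. rewrite Hin, split_size.
  destruct (Nat.ltb_spec s (S N)), (Nat.ltb_spec s N); lia.
Qed.

Lemma split_admissible (phi : nat) :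
  admissible n z zBS phi T ->
  (forall j, (j < n)%nat -> p <> z j) -> p <> zBS ->
  (forall a, (a < nsteiner T)%nat -> spos T a <> p) ->
  INR phi <= 2 + vsum N (fun u => if moved T i keep u then 1 else 0) ->
  admissible n z zBS phi T'.
Proof.
  intros [_ Hdeg] Hpz HpBS Hps Hphi. split; [exact (split_is_fqst Hpz HpBS Hps)|].
  intros s Hs. rewrite split_size in Hs. destruct (Nat.eq_dec s N) as [-> | HsN].
  - apply INR_le. rewrite split_degree_new. exact Hphi.
  - rewrite split_degree_old by lia. apply Hdeg. lia.
Qed.

Lemma split_cost :
  cost n z zBS T' = cost n z zBS T
  + vsum N (fun u => if moved T i keep u
                   then flow T u * (sq_dist (vpos n z zBS T u) p - sq_dist (vpos n z zBS T u) (z i))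
                   else 0)
  + (flow T' i * sq_dist (z i) p - flow T i * sq_dist (z i) (vpos n z zBS T (par T i)))
  + flow T i * sq_dist p (vpos n z zBS T (par T i)).
Proof.
  unfold cost. change (sumR (map ?g (seq 0 ?M))) with (vsum M g).
  rewrite split_size, vsum_succ, split_flow_new, split_par_new, split_vpos_new.
  rewrite (split_vpos_relabel _ par_i_le).
  rewrite (vsum_ext _ _ (fun u =>
     (flow T u * sq_dist (vpos n z zBS T u) (vpos n z zBS T (par T u))
      + (if moved T i keep u
         then flow T u * (sq_dist (vpos n z zBS T u) p - sq_dist (vpos n z zBS T u) (z i))
         else 0))
     + (if Nat.eqb u i
        then flow T' i * sq_dist (z i) p - flow T i * sq_dist (z i) (vpos n z zBS T (par T i))
        else 0))).
  { rewrite !vsum_plus, vsum_single. destruct (Nat.ltb_spec i N); [lra | lia]. }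
  intros u Hu. rewrite (split_vpos_old u Hu). destruct (Nat.eq_dec u i) as [-> | Hui].
  - rewrite split_par_i, split_vpos_new, moved_i, Nat.eqb_refl, (vpos_source n z zBS T i Hi).
    lra.
  - rewrite (proj2 (Nat.eqb_neq u i) Hui), (split_flow_other u Hu Hui).
    destruct (moved T i keep u) eqn:Hm.
    + rewrite (split_par_moved u Hu Hm), split_vpos_new, (moved_par u Hm).
      rewrite (vpos_source n z zBS T i Hi). lra.
    + rewrite (split_par_other u Hu Hui Hm).
      rewrite (split_vpos_relabel _ (par_le_sink n z zBS T HT u Hu)). lra.
Qed.

Lemma split_cost_change :
  cost n z zBS T' - cost n z zBS T
  = 2 * (split_gradient n z zBS T i keep fst * (fst p - fst (z i))
         + split_gradient n z zBS T i keep snd * (snd p - snd (z i)))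
    + 2 * flow T i * sq_dist p (z i).
Proof.
  rewrite split_cost, split_flow_i_moved. unfold split_gradient.
  rewrite (vsum_ext _ _ (fun u =>
     2 * (fst p - fst (z i))
       * (if moved T i keep u then flow T u * (fst (z i) - fst (vpos n z zBS T u)) else 0)
     + (2 * (snd p - snd (z i))
          * (if moved T i keep u then flow T u * (snd (z i) - snd (vpos n z zBS T u)) else 0)
        + sq_dist p (z i) * (if moved T i keep u then flow T u else 0)))).
  { rewrite !vsum_plus, !vsum_scal. unfold sq_dist. ring. }
  intros u _. destruct (moved T i keep u); [unfold sq_dist; ring | ring].
Qed.

End Split.

(** Optimality: in an MFQST, every split at a source that respects the degree
    bound is admissible for all fresh positions [p], so by the first-order
    condition its gradient vanishes. *)
Lemma split_stationary (n : nat) (z : nat -> pt) (zBS : pt) (phi : nat) (T : fqst)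
    (i : nat) (keep : nat -> bool) :
  (i < n)%nat -> is_MFQST n z zBS phi T ->
  INR phi <= 2 + vsum (n + nsteiner T) (fun u => if moved T i keep u then 1 else 0) ->
  split_gradient n z zBS T i keep fst = 0 /\ split_gradient n z zBS T i keep snd = 0.
Proof.
  intros Hi [Hadm Hopt] Hphi. pose proof (proj1 Hadm) as HT.
  apply (first_order_condition (z i) _ _ (flow T i)
           (map z (seq 0 n) ++ map (spos T) (seq 0 (nsteiner T)) ++ zBS :: nil)).
  { apply (flow_pos n z zBS T HT). lia. }
  intros p Hp.
  assert (Hadm' : admissible n z zBS phi (split_tree n T i keep p)).
  { apply split_admissible; try assumption.
    - intros j Hj ->. apply Hp, in_or_app. left. apply in_map, in_seq. lia.
    - intros ->. apply Hp, in_or_app. right. apply in_or_app. right. left. reflexivity.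
    - intros a Ha Heq. apply Hp, in_or_app. right. apply in_or_app. left.
      rewrite <- Heq. apply in_map, in_seq. lia. }
  pose proof (Hopt _ Hadm') as Hle.
  rewrite <- (split_cost_change n z zBS T i keep p HT Hi). lra.
Qed.

Lemma moved_all (N : nat) (T : fqst) (i : nat) (a : nat -> R) :
  vsum N (fun u => if moved T i (fun _ => false) u then a u else 0)
  = vsum N (fun u => if Nat.eqb (par T u) i then a u else 0).
Proof. apply vsum_ext. intros u _. unfold moved. rewrite Bool.andb_true_r. reflexivity. Qed.

Lemma moved_all_but_one (N : nat) (T : fqst) (i e : nat) (a : nat -> R) :
  par T e = i -> (e < N)%nat ->
  vsum N (fun u => if moved T i (fun _ => false) u then a u else 0)
  - vsum N (fun u => if moved T i (fun u => Nat.eqb u e) u then a u else 0) = a e.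
Proof.
  intros He HeN. rewrite <- vsum_minus.
  rewrite (vsum_ext _ _ (fun u => if Nat.eqb u e then a e else 0)).
  { rewrite vsum_single. destruct (Nat.ltb_spec e N); [reflexivity | lia]. }
  intros u _. unfold moved. rewrite Bool.andb_true_r.
  destruct (Nat.eqb_spec u e) as [-> | Hue].
  - rewrite He, Nat.eqb_refl. simpl. lra.
  - simpl. rewrite Bool.andb_true_r. destruct (Nat.eqb (par T u) i); lra.
Qed.

Lemma split_gradient_drop (n : nat) (z : nat -> pt) (zBS : pt) (T : fqst) (i e : nat)
    (pr : pt -> R) :
  par T e = i -> (e < n + nsteiner T)%nat ->
  split_gradient n z zBS T i (fun _ => false) pr
  - split_gradient n z zBS T i (fun u => Nat.eqb u e) pr
  = flow T e * (pr (z i) - pr (vpos n z zBS T e)).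
Proof.
  intros He HeN. unfold split_gradient.
  pose proof (moved_all_but_one _ T i e
                (fun u => flow T u * (pr (z i) - pr (vpos n z zBS T u))) He HeN).
  lra.
Qed.

(** Otherwise both the
    split moving all in-neighbours and the one keeping an in-neighbour [e]
    are admissible, so their gradients vanish; their difference is the pull
    of [e], which forces [e] to sit at the source itself. *)
Lemma mfqst_source_degree_bound (n : nat) (z : nat -> pt) (zBS : pt) (phi : nat)
    (T : fqst) (i : nat) :
  (forall j k, (j < n)%nat -> (k < n)%nat -> z j = z k -> j = k) ->
  (3 <= phi)%nat -> is_MFQST n z zBS phi T -> (i < n)%nat ->
  (degree n T i <= phi - 1)%nat.
Proof.
  intros Hzinj Hphi HM Hi. pose proof (proj1 (proj1 HM)) as HT.
  assert (Hdeg : degree n T i = S (length (in_nbrs n T i))).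
  { unfold degree. destruct (Nat.ltb_spec i (n + nsteiner T)); lia. }
  rewrite Hdeg. destruct (Nat.le_gt_cases (S (length (in_nbrs n T i))) (phi - 1)) as [|Hbig];
    [assumption | exfalso].
  destruct (in_nbrs n T i) as [|e l] eqn:Hnb; [simpl in Hbig; lia|].
  assert (He : In e (in_nbrs n T i)) by (rewrite Hnb; left; reflexivity).
  unfold in_nbrs in He. apply filter_In in He. destruct He as [HeN Hpe].
  apply in_seq in HeN. apply Nat.eqb_eq in Hpe.
  assert (Hcount : INR phi + 1 <= 2 + vsum (n + nsteiner T)
                                        (fun u => if Nat.eqb (par T u) i then 1 else 0)).
  { rewrite <- in_degree_SS, Hnb. replace (2 + INR (length (e :: l))) with (INR (S (S (length (e :: l))))).
    - rewrite <- S_INR. apply le_INR. simpl in Hbig |- *. lia.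
    - rewrite !S_INR. lra. }
  pose proof (moved_all_but_one (n + nsteiner T) T i e (fun _ => 1) Hpe ltac:(lia)) as Hone.
  rewrite moved_all in Hone.
  destruct (split_stationary n z zBS phi T i (fun _ => false) Hi HM)
    as [Gall1 Gall2]; [rewrite moved_all; lra|].
  destruct (split_stationary n z zBS phi T i (fun u => Nat.eqb u e) Hi HM)
    as [Gone1 Gone2]; [lra|].
  pose proof (split_gradient_drop n z zBS T i e fst Hpe ltac:(lia)) as D1.
  pose proof (split_gradient_drop n z zBS T i e snd Hpe ltac:(lia)) as D2.
  assert (Hfe : 0 < flow T e) by (apply (flow_pos n z zBS T HT); lia).
  apply (vpos_neq_source n z zBS T HT i e Hzinj Hi ltac:(lia)).
  - intros ->. apply (par_neq n z zBS T HT i ltac:(lia) Hpe).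
  - apply injective_projections.
    + apply (Rmult_eq_reg_l (flow T e)); lra.
    + apply (Rmult_eq_reg_l (flow T e)); lra.
Qed.

Lemma centre_coord (n : nat) (z : nat -> pt) (zBS : pt) (T : fqst) (v : nat) (pr : pt -> R) :
  coord_linear pr ->
  pr (centre n z zBS T v)
  = / (1 + in_flow n T v)
    * (pr (vpos n z zBS T v)
       + vsum (n + nsteiner T)
            (fun u => if Nat.eqb (par T u) v then flow T u * pr (vpos n z zBS T u) else 0)).
Proof.
  intros Hpr. pose proof Hpr as [Hadd [Hscal _]]. unfold centre.
  rewrite Hscal, Hadd, (coord_sumP pr _ _ _ Hpr). unfold in_nbrs. rewrite sum_filter.
  reflexivity.
Qed.

(** Second part, one coordinate: a vanishing gradient of the full split says
    [f(i) (z_i - y) + sum_u f(u) (z_i - u) = 0] with [f(i) = 1 + sum_u f(u)],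
    i.e. [z_i] is the midpoint of the centre of mass and [y]. *)
Lemma midpoint_coord (n : nat) (z : nat -> pt) (zBS : pt) (T : fqst) (i : nat) (pr : pt -> R) :
  is_fqst n z zBS T -> (i < n)%nat -> coord_linear pr ->
  split_gradient n z zBS T i (fun _ => false) pr = 0 ->
  pr (vpos n z zBS T i)
  = pr (pscale (/ 2) (padd (centre n z zBS T i) (vpos n z zBS T (par T i)))).
Proof.
  intros HT Hi Hpr Hgrad. pose proof Hpr as [Hadd [Hscal _]].
  rewrite Hscal, Hadd, (centre_coord n z zBS T i pr Hpr), (vpos_source n z zBS T i Hi).
  unfold split_gradient in Hgrad. rewrite moved_all in Hgrad.
  rewrite (vsum_ext _ _ (fun u =>
     pr (z i) * (if Nat.eqb (par T u) i then flow T u else 0)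
     - (if Nat.eqb (par T u) i then flow T u * pr (vpos n z zBS T u) else 0))) in Hgrad
    by (intros u _; destruct (Nat.eqb (par T u) i); ring).
  rewrite vsum_minus, vsum_scal, <- in_flow_SS in Hgrad.
  assert (HI : 0 <= in_flow n T i).
  { rewrite in_flow_SS. apply vsum_nonneg. intros u Hu.
    destruct (Nat.eqb (par T u) i); [apply Rlt_le, (flow_pos n z zBS T HT u Hu) | lra]. }
  rewrite (source_balance n z zBS T HT i Hi) in Hgrad. field_simplify_eq; [|lra]. lra.
Qed.

(** Second part: if a source has degree exactly [phi - 1], moving all its
    in-neighbours is admissible, so its position is the midpoint of its
    centre of mass and its out-neighbour. *)
Lemma mfqst_source_midpoint (n : nat) (z : nat -> pt) (zBS : pt) (phi : nat)
    (T : fqst) (i : nat) :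
  is_MFQST n z zBS phi T -> (i < n)%nat -> degree n T i = (phi - 1)%nat -> (2 <= phi)%nat ->
  vpos n z zBS T i = pscale (/ 2) (padd (centre n z zBS T i) (vpos n z zBS T (par T i))).
Proof.
  intros HM Hi Hd Hphi. pose proof (proj1 (proj1 HM)) as HT.
  destruct (split_stationary n z zBS phi T i (fun _ => false) Hi HM) as [G1 G2].
  { rewrite moved_all, <- in_degree_SS.
    replace (2 + INR (length (in_nbrs n T i))) with (INR (S (S (length (in_nbrs n T i))))).
    - apply le_INR. unfold degree in Hd. destruct (Nat.ltb_spec i (n + nsteiner T)); lia.
    - rewrite !S_INR. lra. }
  apply injective_projections; apply midpoint_coord;
    auto using coord_linear_fst, coord_linear_snd.
Qed.

Theorem mainTheorem9 (n : nat) (z : nat -> pt) (zBS : pt) (phi : nat) (T : fqst) :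
  (1 <= n)%nat ->
  (forall i j, (i < n)%nat -> (j < n)%nat -> z i = z j -> i = j) ->
  (forall i, (i < n)%nat -> z i <> zBS) ->
  (3 <= phi)%nat ->
  is_MFQST n z zBS phi T ->
  forall i, (i < n)%nat ->
    (degree n T i <= phi - 1)%nat /\
    (degree n T i = (phi - 1)%nat ->
       vpos n z zBS T i =
       pscale (/ 2) (padd (centre n z zBS T i) (vpos n z zBS T (par T i)))).
Proof.
  intros _ Hzinj _ Hphi HM i Hi. split.
  - exact (mfqst_source_degree_bound n z zBS phi T i Hzinj Hphi HM Hi).
  - intros Hd. apply (mfqst_source_midpoint n z zBS phi T i HM Hi Hd). lia.
Qed.
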